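(* Let $R$ be a ring, $S$ a left Ore set of $R$, and $\mathfrak{a}=\mathrm{ass}_R(S)$. Then \begin{enumerate} \item $S$ is a left localizable set of $R$ if and only if ${}'\mathfrak{a}\neq R$, where ${}'\mathfrak{a}={}'\mathfrak{a}(S)$. \item Suppose ${}'\mathfrak{a}\neq R$. Let ${}'\pi:R\to{}'R:=R/{}'\mathfrak{a}$, $r\mapsto{}'r=r+{}'\mathfrak{a}$, and ${}'S={}'\pi(S)$. Then \begin{enumerate} \item ${}'S$ is a left denominator set of ${}'R$ contained in ${}'\mathcal{C}_{{}'R}$; \item $\mathfrak{a}={}'\pi^{-1}(\mathrm{ass}_l({}'S))$; \item $R\langle S^{-1}\rangle\simeq {}'S^{-1}\,{}'R$, an $R$-isomorphism. \end{enumerate} \end{enumerate}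
   Context: Rings are associative with $1$. A multiplicative set $S$: $SS\subseteq S$, $1\in S$, $0\notin S$. $R\langle S^{-1}\rangle=R\langle X_S\rangle/I_S$, where $R\langle X_S\rangle$ is freely generated by $R$ and noncommuting indeterminates $x_s$ ($s\in S$) and $I_S$ is generated by $sx_s-1,x_ss-1$; $\mathrm{ass}_R(S)$ is the kernel of $R\to R\langle S^{-1}\rangle$. $S$ is left localizable if $R\langle S^{-1}\rangle\ne0$ and every element is of the form $(x_s+I_S)(r+I_S)$, $s\in S$, $r\in R$. Left Ore set: $Sr\cap Rs\ne\emptyset$ for all $r\in R$, $s\in S$. Left denominator set: left Ore and $rs=0$ ($s\in S$) implies $tr=0$ for some $t\in S$; $T^{-1}A$ is the Ore localization. For a ring $A$, ${}'\mathcal{C}_A=\{r\in A: xr=0\Rightarrow x=0\}$; $\mathrm{ass}_l(T)=\{a\in A: ta=0\text{ for some } t\in T\}$. ${}'\mathfrak{a}(S)$ is the least ideal $\mathfrak{b}$ of $R$ such that the image of $S$ in $R/\mathfrak{b}$ is contained in ${}'\mathcal{C}_{R/\mathfrak{b}}$ (it exists). An $R$-isomorphism is an isomorphism compatible with the structure maps from $R$. *)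

From HB Require Import structures.
From mathcomp Require Import all_boot all_algebra.
Set Implicit Arguments. Unset Strict Implicit. Unset Printing Implicit Defensive.
Import GRing.Theory.
Local Open Scope ring_scope.

Definition is_unit (A : pzRingType) (x : A) : Prop :=
  exists y : A, x * y = 1 /\ y * x = 1.

Definition mult_set (A : pzRingType) (S : A -> Prop) : Prop :=
  [/\ S 1, ~ S 0 & forall a b, S a -> S b -> S (a * b)].

Definition left_Ore_set (A : pzRingType) (S : A -> Prop) : Prop :=
  mult_set S /\
  forall (r s : A), S s -> exists s' r' : A, S s' /\ s' * r = r' * s.

Definition left_denom_set (A : pzRingType) (S : A -> Prop) : Prop :=
  left_Ore_set S /\
  forall (r s : A), S s -> r * s = 0 -> exists t : A, S t /\ t * r = 0.

Definition lC (A : pzRingType) (r : A) : Prop := forall x : A, x * r = 0 -> x = 0.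

Definition ass_l (A : pzRingType) (T : A -> Prop) (a : A) : Prop :=
  exists t : A, T t /\ t * a = 0.

Definition is_ideal (A : pzRingType) (b : A -> Prop) : Prop :=
  [/\ b 0, (forall x y, b x -> b y -> b (x + y)), (forall x, b x -> b (- x))
    & forall r x, b x -> b (r * x) /\ b (x * r)].

(* the image of S in A/b is contained in 'C_{A/b}:
   (x + b)(s + b) = 0 in A/b implies x + b = 0, i.e. x s ∈ b -> x ∈ b *)
Definition S_in_C_mod (A : pzRingType) (S : A -> Prop) (b : A -> Prop) : Prop :=
  forall s, S s -> forall x, b (x * s) -> b x.

(* 'a(S): the least ideal b with image of S in 'C_{A/b}; realized as the
   intersection of all such ideals (which is again such an ideal). *)
Definition a_prime (A : pzRingType) (S : A -> Prop) (r : A) : Prop :=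
  forall b : A -> Prop, is_ideal b -> S_in_C_mod S b -> b r.

(* R<S^{-1}> = R<X_S>/I_S, described by its universal property:
   f : R -> L inverts S, and every ring map inverting S factors uniquely. *)
Definition is_univ_loc (A : pzRingType) (S : A -> Prop) (L : pzRingType)
    (f : {rmorphism A -> L}) : Prop :=
  (forall s, S s -> is_unit (f s)) /\
  forall (B : pzRingType) (g : {rmorphism A -> B}),
    (forall s, S s -> is_unit (g s)) ->
    exists h : {rmorphism L -> B},
      (forall r, h (f r) = g r) /\
      forall h' : {rmorphism L -> B}, (forall r, h' (f r) = g r) -> forall x, h' x = h x.

Definition left_localizable (A : pzRingType) (S : A -> Prop) (L : pzRingType)
    (f : {rmorphism A -> L}) : Prop :=
  (1 : L) <> 0 /\
  forall q : L, exists (s r : A) (y : L),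
    [/\ S s, y * f s = 1, f s * y = 1 & q = y * f r].

Definition is_left_Ore_loc (A : pzRingType) (T : A -> Prop) (Q : pzRingType)
    (g : {rmorphism A -> Q}) : Prop :=
  [/\ (forall t, T t -> is_unit (g t)),
      (forall q : Q, exists (t a : A) (y : Q),
          [/\ T t, y * g t = 1, g t * y = 1 & q = y * g a])
    & forall a, g a = 0 <-> ass_l T a].

Definition img (A B : Type) (p : A -> B) (S : A -> Prop) (y : B) : Prop :=
  exists s, S s /\ p s = y.

(* Let [a' = 'a(S)] and [K = {r | s r \in a' for some s \in S}]. The Ore condition
   makes [K] an ideal, and [S] is regular on both sides modulo [K], so the classical
   construction of left fractions gives a ring [S^-1 (R/K)] receiving [R] with
   kernel inside [K] and with [S] inverted. By universality [ker f] lies in [K];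
   conversely [f] kills [a'] (its kernel is an ideal modulo which [S] is regular)
   and inverts [S], so [ker f = K]. Universality applied to the subring of left
   fractions [(f s)^-1 f r] of [L] shows that every element of [L] is such a
   fraction. Then [L = 0] iff [1 \in K] iff [a' = R]; and when [a' <> R], the map
   from [L] to an Ore localization of [R/a'] at the image of [S] is injective since
   both kernels are [K], and surjective since both rings consist of fractions. *)

From HB Require Import structures.
From mathcomp Require Import all_boot all_algebra.
From mathcomp Require Import boolp.
Set Implicit Arguments. Unset Strict Implicit. Unset Printing Implicit Defensive.
Import GRing.Theory.
Local Open Scope ring_scope.

Section Ideals.
Variables (A : pzRingType) (b : A -> Prop).
Hypothesis b_ideal : is_ideal b.

Lemma ideal0 : b 0.
Proof. by case: b_ideal. Qed.

Lemma idealD x y : b x -> b y -> b (x + y).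
Proof. by case: b_ideal => _ bD _ _; apply: bD. Qed.

Lemma idealN x : b x -> b (- x).
Proof. by case: b_ideal => _ _ bN _; apply: bN. Qed.

Lemma idealMl r x : b x -> b (r * x).
Proof. by case: b_ideal => _ _ _ bM /(bM r) []. Qed.

Lemma idealMr r x : b x -> b (x * r).
Proof. by case: b_ideal => _ _ _ bM /(bM r) []. Qed.

Lemma regular_ideal_full S s : S_in_C_mod S b -> S s -> b s -> forall r, b r.
Proof. by move=> bS Ss bs r; apply: (bS s Ss); apply: idealMl. Qed.

End Ideals.

Lemma inj_surj_bijective (A B : Type) (h : A -> B) :
  injective h -> (forall b, exists a, h a = b) -> bijective h.
Proof.
move=> h_inj h_surj; exists (fun b => sval (cid (h_surj b))) => [a|b].
  by apply: h_inj; case: cid.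
by case: cid.
Qed.

Lemma a_prime_ideal (A : pzRingType) (S : A -> Prop) : is_ideal (a_prime S).
Proof.
split=> [b bI _ | x y ax ay b bI bS | x ax b bI bS | r x ax].
- exact: ideal0.
- by apply: (idealD bI); [exact: ax | exact: ay].
- by apply: (idealN bI); exact: ax.
- by split=> b bI bS; [apply: (idealMl bI) | apply: (idealMr bI)]; exact: ax.
Qed.

Lemma a_prime_regular (A : pzRingType) (S : A -> Prop) : S_in_C_mod S (a_prime S).
Proof. by move=> s Ss x axs b bI bS; apply: (bS s Ss); exact: axs. Qed.

Arguments a_prime_ideal {A} S.
Arguments a_prime_regular {A} S.

Section Units.
Variable A : pzRingType.
Implicit Types u x y z : A.

Lemma linv_eq_rinv u y z : y * u = 1 -> u * z = 1 -> y = z.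
Proof. by move=> yu uz; rewrite -[y]mulr1 -uz mulrA yu mul1r. Qed.

Lemma mulr_unit_eq0 u x : is_unit u -> x * u = 0 -> x = 0.
Proof. by case=> y [uy _] xu; rewrite -[x]mulr1 -uy mulrA xu mul0r. Qed.

Lemma unit_mulr_eq0 u x : is_unit u -> u * x = 0 -> x = 0.
Proof. by case=> y [_ yu] ux; rewrite -[x]mul1r -yu -mulrA ux mulr0. Qed.

End Units.

Section Kernels.
Variables (A B : pzRingType) (g : {rmorphism A -> B}) (S : A -> Prop).
Hypothesis g_unit : forall s, S s -> is_unit (g s).

Lemma ker_ideal : is_ideal (fun r => g r = 0).
Proof.
split=> [|x y gx gy|x gx|r x gx]; first exact: rmorph0.
- by rewrite rmorphD gx gy addr0.
- by rewrite rmorphN gx oppr0.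
- by rewrite !rmorphM gx mulr0 mul0r.
Qed.

Lemma ker_regular : S_in_C_mod S (fun r => g r = 0).
Proof. by move=> s Ss x; rewrite rmorphM; apply: mulr_unit_eq0; exact: g_unit. Qed.

Lemma a_prime_ker r : a_prime S r -> g r = 0.
Proof. by move=> ar; exact: (ar _ ker_ideal ker_regular). Qed.

End Kernels.

Definition ass_mod (A : pzRingType) (S b : A -> Prop) (r : A) : Prop :=
  exists s, S s /\ b (s * r).

Section AssMod.
Variables (A : pzRingType) (S b : A -> Prop).
Hypothesis S1 : S 1.
Hypothesis SM : forall s t, S s -> S t -> S (s * t).
Hypothesis Ore : forall r s, S s -> exists s' r', S s' /\ s' * r = r' * s.
Hypothesis b_ideal : is_ideal b.

Lemma ass_mod_ideal : is_ideal (ass_mod S b).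
Proof.
split=> [|x y [s [Ss bx]] [t [St by_]] | x [s [Ss bx]] | r x [s [Ss bx]]].
- by exists 1; rewrite mulr0; split; last exact: (ideal0 b_ideal).
- have [c [d [Sc cs_dt]]] := Ore s St.
  exists (c * s); split; first exact: SM.
  rewrite mulrDr {2}cs_dt -!mulrA.
  by apply: (idealD b_ideal); apply: (idealMl b_ideal).
- by exists s; split=> //; rewrite mulrN; apply: (idealN b_ideal).
- have [s' [r' [Ss' s'r]]] := Ore r Ss.
  split; [exists s' | exists s]; split=> //; rewrite mulrA.
    by rewrite s'r -mulrA; exact: (idealMl b_ideal).
  exact: (idealMr b_ideal).
Qed.

Lemma ass_mod_regular : S_in_C_mod S b -> S_in_C_mod S (ass_mod S b).
Proof.
by move=> bS s Ss x [t [St bx]]; exists t; split=> //; apply: (bS s Ss); rewrite -mulrA.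
Qed.

Lemma ass_mod_cancel s x : S s -> ass_mod S b (s * x) -> ass_mod S b x.
Proof. by move=> Ss [t [St bx]]; exists (t * s); split; [exact: SM | rewrite -mulrA]. Qed.

End AssMod.

Section LeftFractions.
Variables (R : pzRingType) (S K : R -> Prop).
Hypotheses (S1 : S 1) (SM : forall s t, S s -> S t -> S (s * t)).
Hypothesis Ore : forall r s, S s -> exists s' r', S s' /\ s' * r = r' * s.
Hypotheses (K_ideal : is_ideal K) (K_regr : S_in_C_mod S K).
Hypothesis K_regl : forall s x, S s -> K (s * x) -> K x.

Local Notation "x ≡ y" := (K (x - y)) (at level 70, no associativity).

Lemma eqv_eq x y : x = y -> x ≡ y.
Proof. by move=> ->; rewrite subrr; exact: ideal0. Qed.

Lemma eqv_sym x y : x ≡ y -> y ≡ x.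
Proof. by move/(idealN K_ideal); rewrite opprB. Qed.

Lemma eqv_trans y x z : x ≡ y -> y ≡ z -> x ≡ z.
Proof. by move=> xy /(idealD K_ideal xy); rewrite addrA subrK. Qed.

Lemma eqvD x x' y y' : x ≡ x' -> y ≡ y' -> x + y ≡ x' + y'.
Proof. by move=> xx' /(idealD K_ideal xx'); rewrite opprD addrACA. Qed.

Lemma eqvN x y : x ≡ y -> - x ≡ - y.
Proof. by move/(idealN K_ideal); rewrite opprB opprK addrC. Qed.

Lemma eqvMl r x y : x ≡ y -> r * x ≡ r * y.
Proof. by move/(idealMl K_ideal r); rewrite mulrBr. Qed.

Lemma eqvMr r x y : x ≡ y -> x * r ≡ y * r.
Proof. by move/(idealMr K_ideal r); rewrite mulrBl. Qed.

Lemma eqv_cancelr s x y : S s -> x * s ≡ y * s -> x ≡ y.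
Proof. by move=> Ss; rewrite -mulrBl; exact: K_regr. Qed.

Lemma eqv_cancell s x y : S s -> s * x ≡ s * y -> x ≡ y.
Proof. by move=> Ss; rewrite -mulrBr; exact: K_regl. Qed.

(* [s^-1 a] and [t^-1 b] agree in [S^-1 (R/K)]; a fraction is represented by
   its class [same_frac s a], which avoids building the quotient [R/K]. *)
Definition same_frac s a t b := forall c d, c * s ≡ d * t -> c * a ≡ d * b.

Lemma same_frac_refl s a : S s -> same_frac s a s a.
Proof. by move=> Ss c d /(eqv_cancelr Ss)/(eqvMr a). Qed.

Lemma same_frac_sym s a t b : same_frac s a t b -> same_frac t b s a.
Proof. by move=> E c d /eqv_sym/E/eqv_sym. Qed.

Lemma same_frac_trans t s a b x y :
  S t -> same_frac s a t b -> same_frac t b x y -> same_frac s a x y.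
Proof.
move=> St E1 E2 c d csdx.
have [v [w [Sv vcs_wt]]] := Ore (c * s) St.
apply: (eqv_cancell Sv); rewrite !mulrA.
apply: (@eqv_trans (w * b)).
  by apply: E1; rewrite -mulrA vcs_wt; exact: eqv_eq.
by apply: E2; rewrite -vcs_wt -!mulrA; exact: eqvMl.
Qed.

Lemma same_frac_intro c d s a t b : S s -> S t -> S (c * s) ->
  c * s ≡ d * t -> c * a ≡ d * b -> same_frac s a t b.
Proof.
move=> Ss St Scs csdt cadb c' d' c's_d't.
have [e [g [Se ec's_gcs]]] := Ore (c' * s) Scs.
have ec'_gc : e * c' ≡ g * c.
  by apply: (eqv_cancelr Ss); apply: eqv_eq; rewrite -!mulrA.
have ed'_gd : e * d' ≡ g * d.
  apply: (eqv_cancelr St); rewrite -!mulrA.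
  apply: eqv_trans (eqvMl e (eqv_sym c's_d't)) _.
  by rewrite ec's_gcs; exact: eqvMl.
apply: (eqv_cancell Se); rewrite !mulrA.
apply: eqv_trans (eqvMr a ec'_gc) _.
rewrite -!mulrA; apply: eqv_trans (eqvMl g cadb) _.
by rewrite !mulrA; apply: eqvMr; exact: eqv_sym.
Qed.

Record lfrac := LFrac {
  lfrac_class : R -> R -> Prop;
  _ : exists2 p : R * R, S p.1 & lfrac_class = same_frac p.1 p.2 }.

Lemma lfrac_inj q1 q2 : lfrac_class q1 = lfrac_class q2 -> q1 = q2.
Proof.
by case: q1 q2 => P1 H1 [P2 H2] /= E; subst P2; rewrite (Prop_irrelevance H1 H2).
Qed.

Lemma same_frac_class s a :
  S s -> exists2 p : R * R, S p.1 & same_frac s a = same_frac p.1 p.2.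
Proof. by exists (s, a). Qed.

(* A junk denominator [s] outside [S] is replaced by [1], with numerator [0]. *)
Definition frac s a : lfrac :=
  if pselect (S s) is left Ss then LFrac (same_frac_class a Ss)
  else LFrac (same_frac_class 0 S1).

Lemma frac_class s a : S s -> lfrac_class (frac s a) = same_frac s a.
Proof. by rewrite /frac; case: pselect. Qed.

Lemma frac_eq c d s a t b : S s -> S t -> S (c * s) ->
  c * s ≡ d * t -> c * a ≡ d * b -> frac s a = frac t b.
Proof.
move=> Ss St Scs csdt cadb; apply: lfrac_inj; rewrite !frac_class //.
have E := same_frac_intro Ss St Scs csdt cadb.
apply/funext => x; apply/funext => y; apply/propext; split.
  exact: same_frac_trans Ss (same_frac_sym E).
exact: same_frac_trans St E.
Qed.

Lemma frac_expand c s a : S s -> S (c * s) -> frac s a = frac (c * s) (c * a).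
Proof. by move=> Ss Scs; apply: (@frac_eq c 1) => //; rewrite mul1r; exact: eqv_eq. Qed.

Lemma frac_same s a t b : S s -> S t -> frac s a = frac t b -> same_frac s a t b.
Proof.
move=> Ss St E; have := frac_class a Ss.
by rewrite E frac_class // => <-; exact: same_frac_refl.
Qed.

Lemma frac_surj q : exists2 p : R * R, S p.1 & q = frac p.1 p.2.
Proof.
case: q => P [[s a] /= Ss EP]; exists (s, a) => //.
by apply: lfrac_inj; rewrite frac_class.
Qed.

Lemma frac_common2 q1 q2 : exists u x y, [/\ S u, q1 = frac u x & q2 = frac u y].
Proof.
have [[s a] /= Ss ->] := frac_surj q1; have [[t b] /= St ->] := frac_surj q2.
have [c [d [Sc cs_dt]]] := Ore s St.
have Scs := SM Sc Ss; have Sdt : S (d * t) by rewrite -cs_dt.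
exists (c * s), (c * a), (d * b).
by rewrite {1}(frac_expand a Ss Scs) {1}cs_dt (frac_expand b St Sdt) -cs_dt.
Qed.

Lemma frac_common3 q1 q2 q3 :
  exists u x y z, [/\ S u, q1 = frac u x, q2 = frac u y & q3 = frac u z].
Proof.
have [u [x [y [Su -> ->]]]] := frac_common2 q1 q2.
have [[t b] /= St ->] := frac_surj q3.
have [c [d [Sc cu_dt]]] := Ore u St.
have Scu := SM Sc Su; have Sdt : S (d * t) by rewrite -cu_dt.
exists (c * u), (c * x), (c * y), (d * b).
by rewrite -!frac_expand // cu_dt -frac_expand.
Qed.

Definition repr q : R * R := sval (cid2 (frac_surj q)).

Lemma repr_frac s a :
  S s -> S (repr (frac s a)).1 /\ same_frac (repr (frac s a)).1 (repr (frac s a)).2 s a.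
Proof.
move=> Ss; rewrite /repr; case: cid2 => -[s0 a0] /= S0 E0.
by split=> //; apply: frac_same => //; rewrite E0.
Qed.

Lemma ore_pair_ex r s : S s -> exists2 p : R * R, S p.1 & p.1 * r = p.2 * s.
Proof. by move=> /(Ore r) [c [d [Sc E]]]; exists (c, d). Qed.

Definition ore_pair r s : R * R :=
  if pselect (S s) is left Ss then sval (cid2 (ore_pair_ex r Ss)) else (1, 0).

Lemma ore_pairP r s :
  S s -> S (ore_pair r s).1 /\ (ore_pair r s).1 * r = (ore_pair r s).2 * s.
Proof. by rewrite /ore_pair; case: pselect => // Ss _; case: cid2. Qed.

Definition frac_add q1 q2 :=
  let: (s, a) := repr q1 in let: (t, b) := repr q2 in
  let: (c, d) := ore_pair s t in frac (c * s) (c * a + d * b).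

Definition frac_mul q1 q2 :=
  let: (s, a) := repr q1 in let: (t, b) := repr q2 in
  let: (c, d) := ore_pair a t in frac (c * s) (d * b).

Definition frac_opp q := let: (s, a) := repr q in frac s (- a).

Lemma frac_add_frac c d s a t b : S s -> S t -> S c -> c * s = d * t ->
  frac_add (frac s a) (frac t b) = frac (c * s) (c * a + d * b).
Proof.
move=> Ss St Sc cs_dt; rewrite /frac_add.
move: (repr_frac a Ss) (repr_frac b St).
case: (repr (frac s a)) (repr (frac t b)) => [s0 a0] [t0 b0] /= [S0 E0] [T0 F0].
move: (ore_pairP s0 T0); case: (ore_pair s0 t0) => c0 d0 /= [Sc0 c0s0_d0t0].
have [e [g [Se ec0s0_gcs]]] := Ore (c0 * s0) (SM Sc Ss).
apply: (@frac_eq e g); rewrite ?mulrDr; try by repeat apply: SM.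
  exact: eqv_eq.
apply: eqvD; rewrite !mulrA.
  by apply: E0; rewrite -!mulrA; exact: eqv_eq.
by apply: F0; rewrite -!mulrA -c0s0_d0t0 ec0s0_gcs cs_dt; exact: eqv_eq.
Qed.

Lemma frac_mul_frac c d s a t b : S s -> S t -> S c -> c * a = d * t ->
  frac_mul (frac s a) (frac t b) = frac (c * s) (d * b).
Proof.
move=> Ss St Sc ca_dt; rewrite /frac_mul.
move: (repr_frac a Ss) (repr_frac b St).
case: (repr (frac s a)) (repr (frac t b)) => [s0 a0] [t0 b0] /= [S0 E0] [T0 F0].
move: (ore_pairP a0 T0); case: (ore_pair a0 t0) => c0 d0 /= [Sc0 c0a0_d0t0].
have [e [g [Se ec0s0_gcs]]] := Ore (c0 * s0) (SM Sc Ss).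
apply: (@frac_eq e g); try by repeat apply: SM.
  exact: eqv_eq.
rewrite !mulrA; apply: F0.
have : e * c0 * a0 ≡ g * c * a by apply: E0; rewrite -!mulrA; exact: eqv_eq.
by rewrite -!mulrA c0a0_d0t0 ca_dt.
Qed.

Lemma frac_opp_frac s a : S s -> frac_opp (frac s a) = frac s (- a).
Proof.
move=> Ss; rewrite /frac_opp.
move: (repr_frac a Ss); case: (repr (frac s a)) => s0 a0 /= [S0 E0].
have [e [g [Se es0_gs]]] := Ore s0 Ss.
apply: (@frac_eq e g); try by repeat apply: SM.
  exact: eqv_eq.
by rewrite !mulrN; apply: eqvN; apply: E0; exact: eqv_eq.
Qed.

Lemma frac_add_same u x y : S u -> frac_add (frac u x) (frac u y) = frac u (x + y).
Proof. by move=> Su; rewrite (@frac_add_frac 1 1) ?mul1r. Qed.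

Lemma frac0 u : S u -> frac u 0 = frac 1 0.
Proof. by move=> Su; rewrite (@frac_expand u 1) ?mulr1 ?mulr0. Qed.

Lemma frac_addA : associative frac_add.
Proof.
move=> q1 q2 q3; have [u [x [y [z [Su -> -> ->]]]]] := frac_common3 q1 q2 q3.
by rewrite !frac_add_same ?addrA.
Qed.

Lemma frac_addC : commutative frac_add.
Proof.
move=> q1 q2; have [u [x [y [Su -> ->]]]] := frac_common2 q1 q2.
by rewrite !frac_add_same // addrC.
Qed.

Lemma frac_add0 : left_id (frac 1 0) frac_add.
Proof.
move=> q; have [[u x] /= Su ->] := frac_surj q.
by rewrite -(frac0 Su) frac_add_same // add0r.
Qed.

Lemma frac_addN : left_inverse (frac 1 0) frac_opp frac_add.
Proof.
move=> q; have [[u x] /= Su ->] := frac_surj q.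
by rewrite frac_opp_frac // frac_add_same // addNr frac0.
Qed.

Lemma frac_mulA : associative frac_mul.
Proof.
move=> q1 q2 q3.
have [[s a] /= Ss ->] := frac_surj q1; have [[t b] /= St ->] := frac_surj q2.
have [[v e] /= Sv ->] := frac_surj q3.
have [v1 [b' [Sv1 v1b_b'v]]] := Ore b Sv.
have [w [a2 [Sw wa_a2v1t]]] := Ore a (SM Sv1 St).
rewrite (frac_mul_frac _ St Sv Sv1 v1b_b'v).
rewrite (frac_mul_frac _ Ss (SM Sv1 St) Sw wa_a2v1t).
rewrite (@frac_mul_frac w (a2 * v1)) -?mulrA //.
rewrite (@frac_mul_frac 1 (a2 * b')) ?mul1r ?mulrA //; first exact: SM.
by rewrite -!mulrA v1b_b'v.
Qed.

Lemma frac_mul1 : left_id (frac 1 1) frac_mul.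
Proof.
move=> q; have [[t b] /= St ->] := frac_surj q.
by rewrite (@frac_mul_frac t 1) ?mulr1 ?mul1r.
Qed.

Lemma frac_mul1r : right_id (frac 1 1) frac_mul.
Proof.
move=> q; have [[s a] /= Ss ->] := frac_surj q.
by rewrite (@frac_mul_frac 1 a) ?mulr1 ?mul1r.
Qed.

Lemma frac_mulDl : left_distributive frac_mul frac_add.
Proof.
move=> q1 q2 q3; have [u [x [y [Su -> ->]]]] := frac_common2 q1 q2.
have [[t b] /= St ->] := frac_surj q3.
have [t1 [x' [St1 t1x_x't]]] := Ore x St.
have [t2 [y' [St2 t2t1y_y't]]] := Ore (t1 * y) St.
have St2t1 := SM St2 St1.
rewrite frac_add_same // (@frac_mul_frac (t2 * t1) (t2 * x' + y')) //; last first.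
  by rewrite mulrDr mulrDl -!mulrA t1x_x't t2t1y_y't !mulrA.
rewrite (@frac_mul_frac (t2 * t1) (t2 * x')) //; last by rewrite -!mulrA t1x_x't.
rewrite (@frac_mul_frac (t2 * t1) y') //; last by rewrite -!mulrA t2t1y_y't.
by rewrite frac_add_same ?mulrDl //; exact: SM.
Qed.

Lemma frac_mulDr : right_distributive frac_mul frac_add.
Proof.
move=> q1 q2 q3; have [t [b [e [St -> ->]]]] := frac_common2 q2 q3.
have [[s a] /= Ss ->] := frac_surj q1.
have [t' [a' [St' t'a_a't]]] := Ore a St.
rewrite frac_add_same // !(frac_mul_frac _ Ss St St' t'a_a't).
by rewrite frac_add_same ?mulrDr //; exact: SM.
Qed.

HB.instance Definition _ := gen_eqMixin lfrac.
HB.instance Definition _ := gen_choiceMixin lfrac.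
HB.instance Definition _ := GRing.isPzRing.Build lfrac
  frac_addA frac_addC frac_add0 frac_addN frac_mulA frac_mul1 frac_mul1r
  frac_mulDl frac_mulDr.

Definition frac_of r : lfrac := frac 1 r.

Lemma frac_of_zmod : zmod_morphism frac_of.
Proof.
move=> x y; rewrite /frac_of.
change (frac 1 (x - y) = frac_add (frac 1 x) (frac_opp (frac 1 y))).
by rewrite frac_opp_frac // frac_add_same.
Qed.

Lemma frac_of_monoid : monoid_morphism frac_of.
Proof.
split=> // x y; rewrite /frac_of.
change (frac 1 (x * y) = frac_mul (frac 1 x) (frac 1 y)).
by rewrite (@frac_mul_frac 1 x) ?mul1r ?mulr1.
Qed.

HB.instance Definition _ := GRing.isZmodMorphism.Build R lfrac frac_of frac_of_zmod.
HB.instance Definition _ := GRing.isMonoidMorphism.Build R lfrac frac_of frac_of_monoid.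

Lemma frac_of_unit s : S s -> is_unit (frac_of s).
Proof.
move=> Ss; exists (frac s 1); split.
  change (frac_mul (frac 1 s) (frac s 1) = frac 1 1).
  by rewrite (@frac_mul_frac 1 1) ?mul1r.
change (frac_mul (frac s 1) (frac 1 s) = frac 1 1).
rewrite (@frac_mul_frac 1 1) ?mul1r ?mulr1 //.
by rewrite (@frac_expand s 1) ?mulr1.
Qed.

Lemma frac_of_eq0 r : frac_of r = 0 -> K r.
Proof.
move/(frac_same S1 S1)/(_ 1 1 (eqv_eq erefl)).
by rewrite !mul1r subr0.
Qed.

Lemma left_fraction_rmorph : exists (B : pzRingType) (phi : {rmorphism R -> B}),
  (forall s, S s -> is_unit (phi s)) /\ (forall r, phi r = 0 -> K r).
Proof. by exists lfrac, frac_of; split; [exact: frac_of_unit | exact: frac_of_eq0]. Qed.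

End LeftFractions.

Section UniversalLocalization.
Variables (R : pzRingType) (S : R -> Prop) (L : pzRingType) (f : {rmorphism R -> L}).
Hypotheses (S1 : S 1) (SM : forall s t, S s -> S t -> S (s * t)).
Hypothesis Ore : forall r s, S s -> exists s' r', S s' /\ s' * r = r' * s.
Hypothesis f_univ : is_univ_loc S f.

Let f_unit s : S s -> is_unit (f s). Proof. by case: f_univ => + _; apply. Qed.

Definition left_frac (q : L) : Prop :=
  exists s r y, [/\ S s, y * f s = 1, f s * y = 1 & q = y * f r].

Lemma left_frac_f r : left_frac (f r).
Proof. by exists 1, r, 1; rewrite rmorph1 !mulr1 mul1r. Qed.

Lemma left_fracN q : left_frac q -> left_frac (- q).
Proof. by case=> s [r [y [Ss ys sy ->]]]; exists s, (- r), y; rewrite rmorphN mulrN. Qed.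

Lemma left_fracD q q' : left_frac q -> left_frac q' -> left_frac (q + q').
Proof.
case=> s [r [y [Ss ys sy ->]]] [s' [r' [y' [Ss' ys' sy' ->]]]].
have [c [d [Sc cs_ds']]] := Ore s Ss'.
have [u [csu ucs]] := f_unit (SM Sc Ss).
have -> : y = u * f c by rewrite -[LHS]mul1r -ucs rmorphM -!mulrA sy mulr1.
have -> : y' = u * f d by rewrite -[LHS]mul1r -ucs cs_ds' rmorphM -!mulrA sy' mulr1.
exists (c * s), (c * r + d * r'), u; split=> //; first exact: SM.
by rewrite rmorphD !rmorphM mulrDr !mulrA.
Qed.

Lemma left_fracM q q' : left_frac q -> left_frac q' -> left_frac (q * q').
Proof.
case=> s [r [y [Ss ys sy ->]]] [s' [r' [y' [Ss' ys' sy' ->]]]].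
have [t [r1 [St tr_r1s']]] := Ore r Ss'.
have [u [tu ut]] := f_unit St.
have ry' : f r * y' = u * f r1.
  rewrite -[LHS]mul1r -ut -!mulrA [f t * _]mulrA -rmorphM tr_r1s' rmorphM.
  by rewrite -mulrA sy' mulr1.
exists (t * s), (r1 * r'), (y * u); split; first exact: SM.
- by rewrite rmorphM mulrA -[y * u * f t]mulrA ut mulr1 ys.
- by rewrite rmorphM -mulrA [f s * _]mulrA sy mul1r tu.
by rewrite -mulrA [f r * _]mulrA ry' rmorphM !mulrA.
Qed.

Definition left_fracs : {pred L} := fun q => `[< left_frac q >].

Lemma left_fracs_subring : subring_closed left_fracs.
Proof.
split=> [|q q'|q q']; rewrite /left_fracs ?inE.
- by apply/asboolP; rewrite -(rmorph1 f); exact: left_frac_f.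
- move=> /asboolP q_frac /asboolP q'_frac; apply/asboolP.
  by apply: left_fracD => //; exact: left_fracN.
- by move=> /asboolP q_frac /asboolP q'_frac; apply/asboolP; exact: left_fracM.
Qed.

Record left_frac_ring :=
  LeftFracRing { left_frac_val : L; _ : left_frac_val \in left_fracs }.
HB.instance Definition _ := [isSub for left_frac_val].
HB.instance Definition _ := [Choice of left_frac_ring by <:].
HB.instance Definition _ :=
  GRing.SubChoice_isSubPzRing.Build L left_fracs left_frac_ring left_fracs_subring.

Definition f_frac (r : R) : left_frac_ring := Sub (f r) (asboolT (left_frac_f r)).

Lemma f_frac_zmod : zmod_morphism f_frac.
Proof. by move=> x y; apply: val_inj; rewrite /= rmorphB. Qed.

Lemma f_frac_monoid : monoid_morphism f_frac.
Proof. by split=> [|x y]; apply: val_inj; rewrite /= ?rmorph1 ?rmorphM. Qed.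

HB.instance Definition _ :=
  GRing.isZmodMorphism.Build R left_frac_ring f_frac f_frac_zmod.
HB.instance Definition _ :=
  GRing.isMonoidMorphism.Build R left_frac_ring f_frac f_frac_monoid.

Lemma univ_loc_left_frac q : left_frac q.
Proof.
case: f_univ => _ univ.
have f_frac_unit s : S s -> is_unit (f_frac s).
  move=> Ss; have [y [sy ys]] := f_unit Ss.
  have y_frac : y \in left_fracs by apply/asboolP; exists s, 1, y; rewrite rmorph1 mulr1.
  by exists (Sub y y_frac); split; apply: val_inj.
have [h [hf _]] := univ _ f_frac f_frac_unit.
have [id [_ id_uniq]] := univ _ f f_unit.
have val_h x : val (h x) = x.
  have -> : val (h x) = id x by apply: (id_uniq (val \o h)) => r /=; rewrite hf.
  by apply/esym/(id_uniq idfun).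
by rewrite -(val_h q); apply/asboolP; exact: (valP (h q)).
Qed.

Lemma univ_loc_ker r : f r = 0 <-> ass_mod S (a_prime S) r.
Proof.
have K_ideal := ass_mod_ideal S1 SM Ore (a_prime_ideal S).
have K_regr := ass_mod_regular (a_prime_regular S).
have [B [phi [phi_unit phi_ker]]] :=
  left_fraction_rmorph S1 SM Ore K_ideal K_regr (ass_mod_cancel SM).
split=> [fr0 | [s [Ss asr]]].
  case: f_univ => _ /(_ B phi phi_unit) [h [hf _]].
  by apply: phi_ker; rewrite -hf fr0 rmorph0.
apply: (unit_mulr_eq0 (f_unit Ss)); rewrite -rmorphM; exact: a_prime_ker f_unit _ asr.
Qed.

Lemma univ_loc_trivial : (1 : L) = 0 <-> forall r, a_prime S r.
Proof.
rewrite -(rmorph1 f); split=> [/univ_loc_ker [s [Ss as1]] | a_full].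
  apply: (regular_ideal_full (a_prime_ideal S) (a_prime_regular S) Ss).
  by rewrite -[s]mulr1.
by apply/univ_loc_ker; exists 1.
Qed.

Lemma univ_loc_localizable : left_localizable S f <-> ~ (forall r, a_prime S r).
Proof.
split=> [[L_nz _] a_full | a_proper]; first exact/L_nz/univ_loc_trivial.
by split=> [/univ_loc_trivial // | q]; exact: univ_loc_left_frac.
Qed.

Lemma univ_loc_iso (R' Q : pzRingType)
    (pi : {rmorphism R -> R'}) (g : {rmorphism R' -> Q}) :
  (forall y, exists r, pi r = y) ->
  (forall r, f r = 0 <-> ass_l (img pi S) (pi r)) ->
  is_left_Ore_loc (img pi S) g ->
  exists h : {rmorphism L -> Q}, bijective h /\ forall r, h (f r) = g (pi r).
Proof.
move=> pi_surj f_ker [g_unit g_frac g_ker].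
have gpi_unit s : S s -> is_unit ((g \o pi) s) by move=> Ss; apply: g_unit; exists s.
have [h [hf _]] := f_univ.2 _ _ gpi_unit.
have {}hf r : h (f r) = g (pi r) := hf r.
have h_ker x : h x = 0 -> x = 0.
  have [s [r [y [Ss ys sy ->]]]] := univ_loc_left_frac x.
  rewrite rmorphM hf => hy_gr0.
  have hy_unit : is_unit (h y).
    by exists (g (pi s)); rewrite -hf -!rmorphM ys sy rmorph1.
  have /f_ker -> : ass_l (img pi S) (pi r).
    by apply/g_ker; exact: unit_mulr_eq0 hy_unit hy_gr0.
  by rewrite mulr0.
exists h; split=> //; apply: inj_surj_bijective; first exact: raddf_inj.
move=> q; have [_ [a [y [[s [Ss <-]] ys sy ->]]]] := g_frac q.
have [r <-] := pi_surj a; have [u [su us]] := f_unit Ss.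
exists (u * f r); rewrite rmorphM hf; congr (_ * _).
by symmetry; apply: (linv_eq_rinv ys); rewrite -hf -rmorphM su rmorph1.
Qed.

End UniversalLocalization.

Section Image.
Variables (R R' : pzRingType) (pi : {rmorphism R -> R'}) (S b : R -> Prop).
Hypothesis pi_surj : forall y, exists r, pi r = y.
Hypothesis pi_ker : forall r, pi r = 0 <-> b r.

Lemma img_lC : S_in_C_mod S b -> forall y, img pi S y -> lC y.
Proof.
move=> bS _ [s [Ss <-]] x; have [r <-] := pi_surj x.
by rewrite -rmorphM => /pi_ker/(bS s Ss)/pi_ker.
Qed.

Lemma img_nonzero : is_ideal b -> S_in_C_mod S b -> ~ (forall r, b r) -> ~ img pi S 0.
Proof.
move=> bI bS b_proper [s [Ss /pi_ker bs]].
exact/b_proper/(regular_ideal_full bI bS Ss bs).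
Qed.

Lemma img_left_Ore : left_Ore_set S -> ~ img pi S 0 -> left_Ore_set (img pi S).
Proof.
move=> [[S1 _ SM] Ore] img_n0; split.
  split=> //; first by exists 1; rewrite rmorph1.
  move=> _ _ [s [Ss <-]] [t [St <-]].
  by exists (s * t); rewrite rmorphM; split=> //; exact: SM.
move=> y _ [s [Ss <-]]; have [r <-] := pi_surj y.
have [s' [r' [Ss' E]]] := Ore r s Ss.
by exists (pi s'), (pi r'); split; [exists s' | rewrite -!rmorphM E].
Qed.

Lemma ass_mod_img r : ass_mod S b r <-> ass_l (img pi S) (pi r).
Proof.
split=> [[s [Ss bsr]] | [_ [[s [Ss <-]] sr0]]].
  by exists (pi s); split; [exists s | rewrite -rmorphM; exact/pi_ker].
by exists s; split=> //; apply/pi_ker; rewrite rmorphM.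
Qed.

End Image.

Lemma left_denom_set_lC (A : pzRingType) (T : A -> Prop) :
  left_Ore_set T -> (forall y, T y -> lC y) -> left_denom_set T.
Proof.
move=> T_Ore T_lC; split=> // r s Ts /(T_lC s Ts) ->.
by case: T_Ore => -[T1 _ _] _; exists 1; rewrite mulr0.
Qed.

Theorem theorem1p5 (R : nzRingType) (S : R -> Prop)
    (L : pzRingType) (f : {rmorphism R -> L}) :
  left_Ore_set S -> is_univ_loc S f ->
  (left_localizable S f <-> ~ (forall r : R, a_prime S r)) /\
  (~ (forall r : R, a_prime S r) ->
   forall (R' : pzRingType) (pi : {rmorphism R -> R'}),
     (forall y : R', exists r : R, pi r = y) ->
     (forall r : R, pi r = 0 <-> a_prime S r) ->
     [/\ left_denom_set (img pi S) /\ (forall y, img pi S y -> lC y),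
         (forall r : R, f r = 0 <-> ass_l (img pi S) (pi r))
       & forall (Q : pzRingType) (g : {rmorphism R' -> Q}),
           is_left_Ore_loc (img pi S) g ->
           exists h : {rmorphism L -> Q},
             bijective h /\ forall r : R, h (f r) = g (pi r)]).
Proof.
move=> S_Ore f_univ; have [[S1 _ SM] Ore] := S_Ore.
split=> [|a_proper R' pi pi_surj pi_ker]; first exact: univ_loc_localizable.
have a_ideal := a_prime_ideal S; have a_reg := a_prime_regular S.
have f_ker r : f r = 0 <-> ass_l (img pi S) (pi r).
  exact: iff_trans (univ_loc_ker S1 SM Ore f_univ r) (ass_mod_img S pi_ker r).
have S'_lC := img_lC pi_surj pi_ker a_reg.
split=> //; last by move=> Q g; exact: univ_loc_iso.
split=> //; apply: left_denom_set_lC S'_lC.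
by apply: img_left_Ore => //; exact: img_nonzero.
Qed.
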